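(* For all positive integers $k$ and $n$, with $\ell:=\lfloor (k+1)^2/4\rfloor$ and $q:=n\bmod \ell$, \[ \nu_k(K_{k+1,n}) \le q\binom{\frac{n-q}{\ell}+1}{2} + (\ell-q)\binom{\frac{n-q}{\ell}}{2}. \]
   Context: A book with $k$ pages consists of a line (the spine) and $k$ half-planes (the pages) whose common boundary is the spine. A $k$-page drawing of a graph places all vertices on the spine and draws each edge inside a single page (edges may cross). $\nu_k(G)$ is the minimum number of crossings over all $k$-page drawings of $G$. Convention: $\binom{a}{b}=0$ whenever $a<b$. *)

From mathcomp Require Import all_boot all_fingroup.
Set Implicit Arguments. Unset Strict Implicit. Unset Printing Implicit Defensive.

Record graph := Graph {
  gV : finType;
  gE : finType;
  gends : gE -> gV * gV
}.

Definition Kbip (m n : nat) : graph :=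
  @Graph ('I_m + 'I_n)%type ('I_m * 'I_n)%type (fun e => (inl e.1, inr e.2)).

(* A k-page book drawing of G: a linear order of the vertices along the spine
   (given by a permutation sigma: vertex v sits at position enum_rank (sigma v))
   together with an assignment of each edge to one of the k pages. *)
Definition drawing (k : nat) (G : graph) : finType :=
  prod {perm gV G} {ffun gE G -> 'I_k}.

Section Crossings.
Variables (k : nat) (G : graph) (D : drawing k G).

Definition spos (v : gV G) : nat := enum_rank (D.1 v).
Definition elo (e : gE G) : nat := minn (spos (gends e).1) (spos (gends e).2).
Definition ehi (e : gE G) : nat := maxn (spos (gends e).1) (spos (gends e).2).

(* The oriented condition lo e < lo f < hi e < hi f holds for
   exactly one orientation of each crossing pair, so counting ordered pairs
   satisfying it counts each crossing exactly once. *)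
Definition ocross (e f : gE G) : bool :=
  (D.2 e == D.2 f) && [&& elo e < elo f, elo f < ehi e & ehi e < ehi f].

Definition crossings : nat := #|[set p : gE G * gE G | ocross p.1 p.2]|.
End Crossings.

(* nu_k(G): minimum number of crossings over all k-page drawings of G.
   (The neutral element #|E|^2 bounds the crossing number of any drawing, so
   it does not affect the minimum whenever a k-page drawing exists, i.e. k > 0
   or G has no edges.) *)
Definition nu (k : nat) (G : graph) : nat :=
  \big[minn/(#|gE G| ^ 2)]_(D : drawing k G) crossings D.

From mathcomp Require Import all_boot all_fingroup all_order zify.

(* Put the k+1 vertices a_0 < ... < a_k of the small side on the spine and sort the vertices
   b_j of the large side into l = ⌊(k+1)/2⌋⌈(k+1)/2⌉ residue classes j mod l.  A class is a
   pair (g, x) with g < ⌊(k+1)/2⌋ and ⌊(k+1)/2⌋ - 1 <= x < k.  The b_j are listed by class and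
   then by index, and a_m is inserted right after the last class with g <= m.  The edge a_m b_j,
   with b_j in class (g, x), goes to page m + g mod k, where m is first lowered by one if m > x.
   Then two edges of a page interleave only if they are a_x b_j and a_(x+1) b_j' with j < j' in
   the same class, so the crossings inject into the pairs j < j' with j = j' mod l, and there
   are q C(s+1, 2) + (l - q) C(s, 2) of these, where s = n / l. *)

Set Implicit Arguments.
Unset Strict Implicit.

Section RankPermutation.
Variables (T : finType) (key : T -> nat).

Definition key_rank (v : T) : nat := #|[set u | key u < key v]|.

Lemma key_rank_lt u v : (key_rank u < key_rank v) = (key u < key v).
Proof.
rewrite /key_rank; case: (ltngtP (key u) (key v)) => [ltuv|ltvu|->]; last by rewrite ltnn.
- apply: proper_card; apply/properP; split; last by exists u; rewrite !inE ?ltuv ?ltnn.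
  by apply/subsetP => w; rewrite !inE => /ltn_trans; apply.
- apply/negbTE; rewrite -leqNgt; apply/subset_leq_card/subsetP => w.
  by rewrite !inE => /ltn_trans; apply.
Qed.

Lemma key_rank_bound v : key_rank v < #|T|.
Proof.
apply: proper_card; apply/properP; split; first exact: subset_predT.
by exists v; rewrite ?inE ?ltnn.
Qed.

Definition ranked (v : T) : T := enum_val (Ordinal (key_rank_bound v)).

Hypothesis key_inj : injective key.

Lemma ranked_inj : injective ranked.
Proof.
move=> u v /(congr1 (@enum_rank T)); rewrite !enum_valK => -[eq_uv].
apply: key_inj; case: (ltngtP (key u) (key v)) => //; by rewrite -key_rank_lt eq_uv ltnn.
Qed.

Definition rank_perm : {perm T} := perm ranked_inj.

Lemma enum_rank_rank_perm v : enum_rank (rank_perm v) = key_rank v :> nat.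
Proof. by rewrite permE /ranked enum_valK. Qed.

End RankPermutation.

Lemma ltn_lex_mulD a b c d n : b < n -> d < n ->
  (a * n + b < c * n + d) = (a < c) || (a == c) && (b < d).
Proof.
move=> lt_bn lt_dn; case: (ltngtP a c) => [lt_ac|lt_ca|->] /=; last by rewrite ltn_add2l.
- have : a.+1 * n <= c * n by rewrite leq_mul2r lt_ac orbT.
  rewrite mulSn; lia.
- have : c.+1 * n <= a * n by rewrite leq_mul2r lt_ca orbT.
  rewrite mulSn; lia.
Qed.

Lemma modn_wrap s d : s < d + d -> s %% d = if s < d then s else s - d.
Proof.
move=> lt_s_2d; case: ifP => [/modn_small //|/negbT]; rewrite -leqNgt => le_ds.
by rewrite -{1}(subnK le_ds) modnDr modn_small // -(ltn_add2r d) subnK.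
Qed.

Definition shifted_slot (x m g : nat) : nat := (if x < m then m.-1 else m) + g.

(* The disjuncts are the possible spine orders of two interleaving edges a_m b and a_m' b',
   with b, b' of classes (g, x), (g', x'), according to the side of a_m (resp. a_m') on which
   b (resp. b') lies. *)
Lemma same_page_interleaving (k G m m' g g' x x' : nat) :
  G < k -> m <= k -> m' <= k -> g <= G -> g' <= G -> G <= x < k -> G <= x' < k ->
  shifted_slot x m g %% k = shifted_slot x' m' g' %% k ->
  [\/ [/\ m < m', m' < g & (g < g') || (g == g') && (x <= x')],
      [/\ m < g', g <= m' & (g' < g) || (g' == g) && (x' <= x)],
      [/\ g <= m', m' < m & m < g'] |
      [/\ g' <= m, m < m' & (g < g') || (g == g') && (x <= x')]] ->
  [/\ g = g', x = x', m = x & m' = x.+1].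
Proof.
move=> ltGk le_m le_m' le_gG le_g'G /andP[le_Gx lt_xk] /andP[le_Gx' lt_x'k].
rewrite /shifted_slot; case: ltnP => ?; case: ltnP => ?.
all: rewrite !modn_wrap; try lia.
all: by case: ifP => ?; case: ifP => ? eq_slot; case=> -[] *; split; lia.
Qed.

Lemma sum_divn_block L s r : 0 < L -> r <= L ->
  \sum_(s * L <= j < s * L + r) j %/ L = r * s.
Proof.
move=> L_gt0; elim: r => [|r IHr] lt_rL; first by rewrite addn0 big_geq.
rewrite addnS (big_nat_recr _ _ _ (leq_addr _ _)) /= IHr; last exact: ltnW.
by rewrite (divnMDl _ _ L_gt0) (divn_small lt_rL) addn0 mulSnr.
Qed.

Lemma sum_divn L N : 0 < L ->
  \sum_(0 <= j < N) j %/ L = L * 'C(N %/ L, 2) + N %% L * (N %/ L).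
Proof.
move=> L_gt0; have def_N := divn_eq N L; rewrite {1}def_N.
rewrite (big_cat_nat (leq0n _) (leq_addr _ _)).
rewrite (sum_divn_block _ L_gt0 (ltnW (ltn_pmod _ L_gt0))).
congr (_ + _); elim: (N %/ L) => [|s IHs]; first by rewrite mul0n big_geq // bin_small ?muln0.
rewrite mulSnr (big_cat_nat (leq0n _) (leq_addr _ _)) /= IHs.
by rewrite (sum_divn_block _ L_gt0 (leqnn L)) binS bin1 mulnDr addnC.
Qed.

Lemma card_under_graph n (f : 'I_n -> nat) : (forall i, f i <= n) ->
  #|[set p : 'I_n * 'I_n | (p.2 : nat) < f p.1]| = \sum_(i < n) f i.
Proof.
move=> le_fn; rewrite -sum1_card.
rewrite (eq_bigl (fun p : 'I_n * 'I_n => true && (p.2 < f p.1))); last by move=> p; rewrite inE.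
rewrite -(pair_big_dep xpredT (fun i i' : 'I_n => i' < f i) (fun _ _ => 1)) /=.
apply: eq_bigr => i _; rewrite -(big_mkord (fun i' => i' < f i) (fun _ => 1)).
rewrite -(big_nat_widen _ _ _ xpredT _ (le_fn i)).
by rewrite sum_nat_const_nat subn0 muln1.
Qed.

Lemma ltn_divn_eqmod L i j : 0 < L -> i %% L = j %% L -> (i %/ L < j %/ L) = (i < j).
Proof.
move=> L_gt0 eq_mod; have def_i := divn_eq i L; have def_j := divn_eq j L.
by rewrite {2}def_i {2}def_j eq_mod ltn_lex_mulD ?ltn_pmod // ltnn andbF orbF.
Qed.

Lemma sum_residue_pairs L r s : r <= L ->
  L * 'C(s, 2) + r * s = r * 'C(s + 1, 2) + (L - r) * 'C(s, 2).
Proof.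
move=> le_rL; have := leq_mul le_rL (leqnn 'C(s, 2)).
rewrite addn1 binS bin1 mulnDr mulnBl; lia.
Qed.

Section SpineClasses.
Variable k : nat.

Definition ngaps : nat := k.+1./2.
Definition width : nat := uphalf k.+1.
Definition nclasses : nat := ngaps * width.

Definition cls (j : nat) : nat := j %% nclasses.
Definition gap (j : nat) : nat := cls j %/ width.
Definition pivot (j : nat) : nat := ngaps.-1 + cls j %% width.

Lemma width_gt0 : 0 < width.
Proof. by rewrite /width; lia. Qed.

Lemma nclasses_eq : nclasses = k.+1 ^ 2 %/ 4.
Proof.
have def_sq : k.+1 ^ 2 = nclasses * 4 + (width - ngaps).
  rewrite /nclasses /width /ngaps; nia.
rewrite def_sq (divnMDl _ _ (isT : 0 < 4)) divn_small ?addn0 //.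
by rewrite /width /ngaps; lia.
Qed.

Lemma leq_cls_lex j j' : cls j <= cls j' ->
  (gap j < gap j') || (gap j == gap j') && (pivot j <= pivot j').
Proof.
have mod_lt i := ltn_pmod (cls i) width_gt0.
rewrite leqNgt (divn_eq (cls j) width) (divn_eq (cls j') width) ltn_lex_mulD //.
rewrite /pivot -/(gap j) -/(gap j'); lia.
Qed.

Lemma eq_cls j j' : gap j = gap j' -> pivot j = pivot j' -> cls j = cls j'.
Proof.
rewrite /pivot => eq_gap /addnI eq_mod.
by rewrite (divn_eq (cls j) width) (divn_eq (cls j') width) -/(gap j) -/(gap j') eq_gap eq_mod.
Qed.

Hypothesis k_gt0 : 0 < k.

Lemma nclasses_gt0 : 0 < nclasses.
Proof. by rewrite /nclasses /ngaps /width; nia. Qed.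

Lemma gap_le j : gap j <= ngaps.-1.
Proof.
have := ltn_pmod j nclasses_gt0; rewrite -/(cls j) /nclasses -ltn_divLR ?width_gt0 //.
rewrite /gap; lia.
Qed.

Lemma pivot_lt j : pivot j < k.
Proof. have := ltn_pmod (cls j) width_gt0; rewrite /pivot /width /ngaps; lia. Qed.

End SpineClasses.

Section BookDrawing.
Variables k n : nat.
Hypotheses (k_gt0 : 0 < k) (n_gt0 : 0 < n).

Local Notation width := (width k).
Local Notation ngaps := (ngaps k).
Local Notation nclasses := (nclasses k).
Local Notation cls := (cls k).
Local Notation gap := (gap k).
Local Notation pivot := (pivot k).

Definition spine_key (v : 'I_k.+1 + 'I_n) : nat :=
  match v with
  | inl m => (m.+1 * width * n).*2
  | inr j => (cls j * n + j).*2.+1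
  end.

Lemma ltn_key_inl_inr m j : (spine_key (inl m) < spine_key (inr j)) = (m < gap j).
Proof.
rewrite /= ltnS leq_double /gap leq_divRL ?(width_gt0 k) //.
by rewrite -[_ * n]addn0 leqNgt ltn_lex_mulD // ltn0 andbF orbF -leqNgt.
Qed.

Lemma ltn_key_inr_inl m j : (spine_key (inr j) < spine_key (inl m)) = (gap j <= m).
Proof.
rewrite [gap j <= m]leqNgt -ltn_key_inl_inr /=.
move: (m.+1 * width * n) (cls j * n + j) => x y; lia.
Qed.

Lemma ltn_key_inl m m' : (spine_key (inl m) < spine_key (inl m')) = (m < m').
Proof. by rewrite /= ltn_double !ltn_pmul2r ?(width_gt0 k). Qed.

Lemma ltn_key_inr j j' :
  (spine_key (inr j) < spine_key (inr j')) = (cls j < cls j') || (cls j == cls j') && (j < j').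
Proof. by rewrite /= ltnS ltn_double ltn_lex_mulD. Qed.

Lemma spine_key_inj : injective spine_key.
Proof.
move=> u v eq_uv; case: (ltngtP (spine_key u) (spine_key v)) => //; rewrite ?eq_uv ?ltnn //.
move: eq_uv; case: u => [m|j]; case: v => [m'|j'] /=.
- by move=> /double_inj/eqP; rewrite !eqn_pmul2r ?(width_gt0 k) // => /eqP[/val_inj ->].
- by move/(congr1 odd); rewrite /= !odd_double.
- by move/(congr1 odd); rewrite /= !odd_double.
- move=> /succn_inj/double_inj/(congr1 (modn^~ n)) /=.
  by rewrite !modnMDl !modn_small // => /val_inj ->.
Qed.

Definition book_page (e : 'I_k.+1 * 'I_n) : 'I_k :=
  Ordinal (ltn_pmod (shifted_slot (pivot e.2) e.1 (gap e.2)) k_gt0).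

Definition book : drawing k (Kbip k.+1 n) :=
  (rank_perm spine_key_inj, [ffun e => book_page e]).

Lemma ltn_spos_book u v : (spos book u < spos book v) = (spine_key u < spine_key v).
Proof. by rewrite /spos !enum_rank_rank_perm key_rank_lt. Qed.

Lemma ltn_spos_book_inr j j' : spos book (inr j) < spos book (inr j') ->
  (gap j < gap j') || (gap j == gap j') && (pivot j <= pivot j').
Proof.
rewrite ltn_spos_book ltn_key_inr => lex_jj'; apply: leq_cls_lex.
by case/orP: lex_jj' => [/ltnW|/andP[/eqP->]].
Qed.

Lemma ocross_book (e f : 'I_k.+1 * 'I_n) : ocross book e f ->
  [/\ e.2 < f.2, cls e.2 = cls f.2, e.1 = pivot e.2 :> nat & f.1 = (pivot e.2).+1 :> nat].
Proof.
case: e f => m j [m' j']; rewrite /ocross /elo /ehi /= !ffunE.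
move=> /andP[/eqP/(congr1 val) same_page].
set pa := spos book (inl m); set pb := spos book (inr j).
set pa' := spos book (inl m'); set pb' := spos book (inr j').
case/and3P=> lo_lt lo_hi hi_lt.
have := ltn_spos_book (inl m) (inr j); have := ltn_spos_book (inr j) (inl m).
have := ltn_spos_book (inl m') (inr j'); have := ltn_spos_book (inr j') (inl m').
have := ltn_spos_book (inl m) (inr j'); have := ltn_spos_book (inr j') (inl m).
have := ltn_spos_book (inl m') (inr j); have := ltn_spos_book (inr j) (inl m').
have := ltn_spos_book (inl m) (inl m'); have := ltn_spos_book (inl m') (inl m).
rewrite !ltn_key_inl_inr !ltn_key_inr_inl !ltn_key_inl -/pa -/pb -/pa' -/pb'.
move=> lt_a'a lt_aa' lt_ba' lt_a'b lt_b'a lt_ab' lt_b'a' lt_a'b' lt_ba lt_ab.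
move/implyP: (@ltn_spos_book_inr j j'); move/implyP: (@ltn_spos_book_inr j' j).
rewrite -/pb -/pb' => lex_j'j lex_jj'.
have [eq_gap eq_pivot eq_m eq_m'] : [/\ gap j = gap j', pivot j = pivot j', m = pivot j :> nat
    & m' = (pivot j).+1 :> nat].
  apply: (same_page_interleaving _ _ _ (gap_le k_gt0 j) (gap_le k_gt0 j')) same_page _.
  - by rewrite /ngaps; lia.
  - by rewrite -ltnS.
  - by rewrite -ltnS.
  - by rewrite /pivot leq_addr (pivot_lt k_gt0).
  - by rewrite /pivot leq_addr (pivot_lt k_gt0).
  rewrite /=; case: (ltnP m (gap j)) => ?; case: (ltnP m' (gap j')) => ?;
    [apply: Or41 | apply: Or42 | apply: Or43 | apply: Or44]; split; lia.
have cls_jj' := eq_cls eq_gap eq_pivot.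
have : pb < pb'.
  have := gap_le k_gt0 j; have := leq_addr (cls j %% width) ngaps.-1.
  rewrite -/(pivot j); lia.
rewrite /pb /pb' ltn_spos_book ltn_key_inr cls_jj' ltnn eqxx => lt_jj'.
by split.
Qed.

(* A crossing is determined by its right B-vertex j' and the quotient j / l of its left one,
   which lies in the same class. *)
Definition crossing_code (p : ('I_k.+1 * 'I_n) * ('I_k.+1 * 'I_n)) : 'I_n * 'I_n :=
  (p.2.2, Ordinal (leq_ltn_trans (leq_div p.1.2 nclasses) (ltn_ord p.1.2))).

Lemma crossings_book_le :
  crossings book <= #|[set p : 'I_n * 'I_n | (p.2 : nat) < p.1 %/ nclasses]|.
Proof.
rewrite /crossings -(card_in_imset (f := crossing_code)).
  apply/subset_leq_card/subsetP => _ /imsetP[[e f] cross_ef ->].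
  rewrite !inE /= in cross_ef *; case: (ocross_book cross_ef) => lt_ef cls_ef _ _.
  by rewrite ltn_divn_eqmod // (nclasses_gt0 k_gt0).
move=> [[m j] [m1 j1]] [[m' j'] [m1' j1']]; rewrite !inE /=.
move=> /ocross_book[/= _ cls_jj1 eq_m eq_m1] /ocross_book[/= _ cls_j'j1 eq_m' eq_m1'].
case=> eq_j1 eq_div; have eq_jj' : j = j' :> nat.
  rewrite (divn_eq j nclasses) (divn_eq j' nclasses) eq_div -/(cls j) -/(cls j').
  by rewrite cls_jj1 cls_j'j1 eq_j1.
by congr ((_, _), (_, _)); apply: val_inj; rewrite /= ?eq_m ?eq_m' ?eq_m1 ?eq_m1' ?eq_jj' ?eq_j1.
Qed.

End BookDrawing.

Theorem lemma20 (k n : nat) : 0 < k -> 0 < n ->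
  let l := (k.+1 ^ 2) %/ 4 in
  let q := n %% l in
  nu k (Kbip k.+1 n) <=
    q * 'C((n - q) %/ l + 1, 2) + (l - q) * 'C((n - q) %/ l, 2).
Proof.
move=> k_gt0 n_gt0 /=; rewrite -(nclasses_eq k).
have L_gt0 := nclasses_gt0 k_gt0; set L := nclasses k.
have -> : (n - n %% L) %/ L = n %/ L by rewrite {1}(divn_eq n L) addnK mulnK.
rewrite -sum_residue_pairs; last exact/ltnW/ltn_pmod.
apply: (@leq_trans (crossings (book k_gt0 n_gt0))).
  exact: (Order.TotalTheory.bigmin_le _ _ (@crossings k _)).
apply: leq_trans (crossings_book_le k_gt0 n_gt0) _.
rewrite (@card_under_graph n (fun j => j %/ L)) => [|j]; last first.
  exact: leq_trans (leq_div _ _) (ltnW (ltn_ord j)).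
by rewrite -(big_mkord xpredT (fun j => j %/ L)) sum_divn.
Qed.
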